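(* For each integer $i \ge 1$ let $X_i$ be the set of all positive integers $x$ with $\{x(\tfrac32)^i\} < \tfrac12$. Then $\bigcap_{i=1}^{\infty} X_i = \emptyset$; that is, there is no positive integer $x$ such that $\{x(\tfrac32)^n\} < \tfrac12$ for all integers $n \ge 0$ (no positive integer is a Z-number).
   Context: For a real number $a$, $\{a\}$ denotes its fractional part, $a - \lfloor a\rfloor$. A Z-number is a positive real number $x$ such that $0 \le \{x(\tfrac32)^n\} < \tfrac12$ for every integer $n\ge 0$. *)

From Stdlib Require Import Reals.
Open Scope R_scope.

(* {a} = a - floor a; Stdlib's frac_part r = r - IZR (Int_part r), Int_part = floor *)
Definition frac (a : R) : R := frac_part a.

Definition Z_number (x : R) : Prop :=
  0 < x /\ forall n : nat, 0 <= frac (x * (3/2) ^ n) < 1/2.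

From Stdlib Require Import Reals Lia Lra Arith.
Open Scope R_scope.

(* Write x = 2^k a with a odd.  Then x (3/2)^(k+1) = 3^(k+1) a / 2 is half of
   an odd integer, so its fractional part is exactly 1/2. *)

Lemma nat_pow2_mul_odd (x : nat) :
  (0 < x)%nat -> exists k a, Nat.Odd a /\ x = (2 ^ k * a)%nat.
Proof.
  induction x as [x IH] using lt_wf_ind; intros Hx.
  destruct (Nat.Even_or_Odd x) as [[y ->] | Hodd].
  - destruct (IH y ltac:(lia) ltac:(lia)) as [k [a [Ha ->]]].
    exists (S k), a; split; [exact Ha | rewrite Nat.pow_succ_r'; lia].
  - exists 0%nat, x; split; [exact Hodd | simpl; lia].
Qed.

Lemma Odd_pow (a n : nat) : Nat.Odd a -> Nat.Odd (a ^ n).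
Proof.
  intros Ha; induction n as [| n IHn].
  - exists 0%nat; reflexivity.
  - rewrite Nat.pow_succ_r'; exact (Nat.Odd_mul _ _ Ha IHn).
Qed.

Lemma frac_IZR_add (z : Z) (f : R) : 0 <= f < 1 -> frac (IZR z + f) = f.
Proof.
  intros Hf; symmetry; exact (proj2 (Int_part_frac_part_spec _ z f Hf eq_refl)).
Qed.

Lemma frac_odd_half (a : nat) : Nat.Odd a -> frac (INR a / 2) = 1 / 2.
Proof.
  intros [b ->].
  replace (INR (2 * b + 1) / 2) with (IZR (Z.of_nat b) + 1 / 2).
  - apply frac_IZR_add; lra.
  - rewrite <- INR_IZR_INZ, plus_INR, mult_INR; simpl; field.
Qed.

Lemma INR_pow2_mul_three_halves_pow (k a : nat) :
  INR (2 ^ k * a) * (3 / 2) ^ S k = INR (3 ^ S k * a) / 2.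
Proof.
  rewrite !mult_INR, !pow_INR.
  replace (INR 2) with 2 by (simpl; lra).
  replace (INR 3) with (2 * (3 / 2)) by (simpl; lra).
  rewrite Rpow_mult_distr; simpl; field.
Qed.

Theorem theorem5p1 : forall x : nat, (0 < x)%nat -> ~ Z_number (INR x).
Proof.
  intros x Hx [_ HZ].
  destruct (nat_pow2_mul_odd x Hx) as [k [a [Ha ->]]].
  assert (Hodd : Nat.Odd (3 ^ S k * a)).
  { apply Nat.Odd_mul; [apply Odd_pow; exists 1%nat; reflexivity | exact Ha]. }
  specialize (HZ (S k)).
  rewrite INR_pow2_mul_three_halves_pow, (frac_odd_half _ Hodd) in HZ.
  lra.
Qed.
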